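(* Let $\alpha_0=\arctan \sqrt{q/p}$. The stationary points, in the region $R=R_1\cup R_2$ of the $(\vartheta,\alpha)$-plane, of the first order differential system \[ \dot{\vartheta}=3\,\sin \vartheta \, \cos \vartheta \, \sin (\alpha-\vartheta), \qquad \dot{\alpha}=q\,\cos \alpha \, \cos \vartheta \,-\, p\,\sin \alpha \, \sin \vartheta \] are exactly \[ P_0=(\alpha_0,\alpha_0),\quad P_1=(\alpha_0,\alpha_0+\pi),\quad Q_1=\left(0,\tfrac{\pi}{2}\right),\quad Q_2=\left(0,\tfrac{3\pi}{2}\right),\quad Q_3=\left(\tfrac{\pi}{2},0\right),\quad Q_4=\left(\tfrac{\pi}{2},\pi\right). \] Moreover, $P_0$ is a spiral sink if $p+q\leq 17$, while it is a nodal sink if $p+q\geq 18$; $P_1$ is a spiral source if $p+q\leq 17$, while it is a nodal source if $p+q\geq 18$; the points $Q_1,Q_2,Q_3,Q_4$ are saddle points.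
   Context: Here $p,q$ are positive integers (the dimensions of the spheres in $SO(p+1)\times SO(q+1)$-invariant hypersurfaces ${\mathbb S}^p\times{\mathbb S}^q\times(a,b)\to{\mathbb R}^{p+1}\times{\mathbb R}^{q+1}$, $(w,z,s)\mapsto(x(s)w,y(s)z)$, with profile curve $(x(s),y(s))$ parametrized by arc length, $\alpha$ the angle of the profile curve with the $x$-axis, and $\vartheta$ the polar angle, $x=r\cos\vartheta$, $y=r\sin\vartheta$). The system above is the one whose trajectories correspond to biconservative profile curves, i.e. solutions of $3\dot\alpha+p\frac{\sin\alpha}{x}-q\frac{\cos\alpha}{y}=0$. The regions are $R_1=\{(\vartheta,\alpha): 0\le\vartheta\le\pi/2,\ \vartheta-\pi/2\le\alpha\le\vartheta+\pi/2\}$ and $R_2=\{(\vartheta,\alpha): 0\le\vartheta\le\pi/2,\ \vartheta+\pi/2\le\alpha\le\vartheta+3\pi/2\}$. *)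

From Stdlib Require Import Reals ZArith.
From Coquelicot Require Import Coquelicot.
Open Scope R_scope.

Definition Fth (th al : R) : R := 3 * sin th * cos th * sin (al - th).
Definition Fal (p q : nat) (th al : R) : R :=
  INR q * cos al * cos th - INR p * sin al * sin th.

Definition stationary (p q : nat) (th al : R) : Prop :=
  Fth th al = 0 /\ Fal p q th al = 0.

Definition inR1 (th al : R) : Prop :=
  0 <= th <= PI / 2 /\ th - PI / 2 <= al <= th + PI / 2.
Definition inR2 (th al : R) : Prop :=
  0 <= th <= PI / 2 /\ th + PI / 2 <= al <= th + 3 * PI / 2.
Definition inR (th al : R) : Prop := inR1 th al \/ inR2 th al.

Definition jac_a (th al : R) : R := Derive (fun t => Fth t al) th.
Definition jac_b (th al : R) : R := Derive (fun a => Fth th a) al.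
Definition jac_c (p q : nat) (th al : R) : R := Derive (fun t => Fal p q t al) th.
Definition jac_d (p q : nat) (th al : R) : R := Derive (fun a => Fal p q th a) al.

Definition eigenvalue (a b c d : R) (z : C) : Prop :=
  ((RtoC a - z) * (RtoC d - z) - RtoC b * RtoC c)%C = RtoC 0.

Definition spiral_sink (a b c d : R) : Prop :=
  (exists z, eigenvalue a b c d z) /\
  forall z, eigenvalue a b c d z -> Im z <> 0 /\ Re z < 0.
Definition spiral_source (a b c d : R) : Prop :=
  (exists z, eigenvalue a b c d z) /\
  forall z, eigenvalue a b c d z -> Im z <> 0 /\ 0 < Re z.
Definition nodal_sink (a b c d : R) : Prop :=
  exists l1 l2 : R, l1 <> l2 /\ l1 < 0 /\ l2 < 0 /\
    forall z, eigenvalue a b c d z <-> (z = RtoC l1 \/ z = RtoC l2).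
Definition nodal_source (a b c d : R) : Prop :=
  exists l1 l2 : R, l1 <> l2 /\ 0 < l1 /\ 0 < l2 /\
    forall z, eigenvalue a b c d z <-> (z = RtoC l1 \/ z = RtoC l2).
Definition saddle (a b c d : R) : Prop :=
  exists l1 l2 : R, l1 < 0 /\ 0 < l2 /\
    forall z, eigenvalue a b c d z <-> (z = RtoC l1 \/ z = RtoC l2).

Definition lin (P : R -> R -> R -> R -> Prop) (p q : nat) (th al : R) : Prop :=
  P (jac_a th al) (jac_b th al) (jac_c p q th al) (jac_d p q th al).

Definition listed_point (a0 th al : R) : Prop :=
  (th = a0 /\ al = a0) \/ (th = a0 /\ al = a0 + PI) \/
  (th = 0 /\ al = PI / 2) \/ (th = 0 /\ al = 3 * PI / 2) \/
  (th = PI / 2 /\ al = 0) \/ (th = PI / 2 /\ al = PI).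

From Stdlib Require Import Reals ZArith Lra Lia Psatz.
From Coquelicot Require Import Coquelicot.
Open Scope R_scope.

(* Since theta' = 3 sin th cos th sin (al - th), a stationary point of the strip
   0 <= th <= pi/2 has th = 0, th = pi/2, or al - th in {0, pi}.  On the two axes
   alpha' = 0 reduces to cos al = 0, resp. sin al = 0; off the axes it becomes
   q cos^2 th = p sin^2 th, whose only solution in the strip is th = alpha0.
   On the axes sin th cos th = 0, so the Jacobian is lower triangular, with
   diagonal entries of opposite signs: saddles.  At P0, resp. P1, the Jacobian is
   -m, resp. m, times [[3, -3], [N, N]], where m = sin alpha0 cos alpha0 > 0 and
   N = p + q; its determinant 6 N m^2 is positive, and its discriminant
   m^2 (N^2 - 18 N + 9) is negative for 1 <= N <= 17 and positive for N >= 18. *)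

Lemma eigenvalue_iff a b c d x y :
  eigenvalue a b c d (x, y) <->
  x * x - y * y - (a + d) * x + (a * d - b * c) = 0 /\ y * (2 * x - (a + d)) = 0.
Proof.
  unfold eigenvalue, RtoC, Cminus, Cmult, Cplus, Copp; simpl.
  split.
  - intro H; injection H; intros; split; lra.
  - intros [H1 H2]; f_equal; lra.
Qed.

Lemma pair_eq_RtoC (x y l : R) : (x, y) = RtoC l <-> x = l /\ y = 0.
Proof. unfold RtoC; split; [intro H; injection H; auto | intros [-> ->]; auto]. Qed.

Definition discriminant (a b c d : R) : R := (a + d) * (a + d) - 4 * (a * d - b * c).

Lemma eigenvalues_nonreal a b c d :
  discriminant a b c d < 0 ->
  (exists z, eigenvalue a b c d z) /\
  forall z, eigenvalue a b c d z -> Im z <> 0 /\ Re z = (a + d) / 2.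
Proof.
  unfold discriminant; intro Hdisc; split.
  - set (s := sqrt (- ((a + d) * (a + d) - 4 * (a * d - b * c)))).
    assert (Hs : s * s = - ((a + d) * (a + d) - 4 * (a * d - b * c)))
      by (apply sqrt_sqrt; lra).
    exists ((a + d) / 2, s / 2); apply eigenvalue_iff; split; nra.
  - intros [x y] [H1 H2]%eigenvalue_iff; simpl.
    destruct (Rmult_integral _ _ H2) as [->|Hx].
    + exfalso; pose proof (Rle_0_sqr (2 * x - (a + d))); unfold Rsqr in *; nra.
    + split; [intros ->|]; nra.
Qed.

Lemma spiral_sink_of_trace_neg a b c d :
  a + d < 0 -> discriminant a b c d < 0 -> spiral_sink a b c d.
Proof.
  intros Htr Hdisc; destruct (eigenvalues_nonreal a b c d Hdisc) as [Hex Hz].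
  split; [exact Hex|]; intros z Hev; destruct (Hz z Hev); split; lra.
Qed.

Lemma spiral_source_of_trace_pos a b c d :
  0 < a + d -> discriminant a b c d < 0 -> spiral_source a b c d.
Proof.
  intros Htr Hdisc; destruct (eigenvalues_nonreal a b c d Hdisc) as [Hex Hz].
  split; [exact Hex|]; intros z Hev; destruct (Hz z Hev); split; lra.
Qed.

Lemma eigenvalues_real a b c d :
  0 < discriminant a b c d ->
  forall z, eigenvalue a b c d z <->
    z = RtoC ((a + d - sqrt (discriminant a b c d)) / 2) \/
    z = RtoC ((a + d + sqrt (discriminant a b c d)) / 2).
Proof.
  intros Hdisc [x y]; rewrite eigenvalue_iff, !pair_eq_RtoC.
  pose proof (sqrt_sqrt _ (Rlt_le _ _ Hdisc)) as Hs.
  unfold discriminant in *; set (s := sqrt _) in *.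
  split.
  - intros [H1 H2]; destruct (Rmult_integral _ _ H2) as [->|Hx].
    + assert (Hroots : (x - (a + d - s) / 2) * (x - (a + d + s) / 2) = 0) by nra.
      destruct (Rmult_integral _ _ Hroots); [left|right]; split; lra.
    + exfalso; assert (x = (a + d) / 2) as -> by lra; nra.
  - intros [[-> ->]|[-> ->]]; split; nra.
Qed.

(* With positive determinant both real eigenvalues have the sign of the trace. *)
Lemma nodal_sink_of_trace_neg a b c d :
  a + d < 0 -> 0 < a * d - b * c -> 0 < discriminant a b c d -> nodal_sink a b c d.
Proof.
  intros Htr Hdet Hdisc.
  pose proof (sqrt_sqrt _ (Rlt_le _ _ Hdisc)) as Hs.
  pose proof (sqrt_lt_R0 _ Hdisc) as Hs0.
  exists ((a + d - sqrt (discriminant a b c d)) / 2),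
         ((a + d + sqrt (discriminant a b c d)) / 2).
  refine (conj _ (conj _ (conj _ (eigenvalues_real a b c d Hdisc))));
    unfold discriminant in *; nra.
Qed.

Lemma nodal_source_of_trace_pos a b c d :
  0 < a + d -> 0 < a * d - b * c -> 0 < discriminant a b c d -> nodal_source a b c d.
Proof.
  intros Htr Hdet Hdisc.
  pose proof (sqrt_sqrt _ (Rlt_le _ _ Hdisc)) as Hs.
  pose proof (sqrt_lt_R0 _ Hdisc) as Hs0.
  exists ((a + d - sqrt (discriminant a b c d)) / 2),
         ((a + d + sqrt (discriminant a b c d)) / 2).
  refine (conj _ (conj _ (conj _ (eigenvalues_real a b c d Hdisc))));
    unfold discriminant in *; nra.
Qed.

Lemma eigenvalues_lower_triangular a c d z :
  eigenvalue a 0 c d z <-> z = RtoC a \/ z = RtoC d.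
Proof.
  destruct z as [x y]; rewrite eigenvalue_iff, !pair_eq_RtoC; split.
  - intros [H1 H2]; destruct (Rmult_integral _ _ H2) as [->|Hx].
    + assert (Hroots : (x - a) * (x - d) = 0) by nra.
      destruct (Rmult_integral _ _ Hroots); [left|right]; split; lra.
    + assert (Hy : y * y + (a - d) * (a - d) / 4 = 0) by nra.
      pose proof (Rle_0_sqr y); pose proof (Rle_0_sqr (a - d)); unfold Rsqr in *.
      assert (y = 0) by nra; left; split; nra.
  - intros [[-> ->]|[-> ->]]; split; nra.
Qed.

Lemma saddle_lower_triangular a c d : a * d < 0 -> saddle a 0 c d.
Proof.
  intro Had; assert (a <> 0) by (intros ->; lra).
  destruct (Rlt_or_le a 0) as [Ha|Ha];
    [exists a, d | exists d, a]; (split; [nra | split; [nra |]]);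
    intro z; rewrite eigenvalues_lower_triangular; tauto.
Qed.

Lemma jac_a_formula th al : jac_a th al =
  3 * (cos th * cos th - sin th * sin th) * sin (al - th) - 3 * sin th * cos th * cos (al - th).
Proof. apply is_derive_unique; unfold Fth; auto_derive; auto; unfold Rminus; ring. Qed.

Lemma jac_b_formula th al : jac_b th al = 3 * sin th * cos th * cos (al - th).
Proof. apply is_derive_unique; unfold Fth; auto_derive; auto; unfold Rminus; ring. Qed.

Lemma jac_c_formula p q th al :
  jac_c p q th al = - INR q * cos al * sin th - INR p * sin al * cos th.
Proof. apply is_derive_unique; unfold Fal; auto_derive; auto; unfold Rminus; ring. Qed.

Lemma jac_d_formula p q th al :
  jac_d p q th al = - INR q * sin al * cos th - INR p * cos al * sin th.
Proof. apply is_derive_unique; unfold Fal; auto_derive; auto; unfold Rminus; ring. Qed.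

Lemma lin_diagonal (P : R -> R -> R -> R -> Prop) p q th :
  let m := sin th * cos th in
  P (- 3 * m) (3 * m) (- INR (p + q) * m) (- INR (p + q) * m) -> lin P p q th th.
Proof.
  unfold lin; rewrite jac_a_formula, jac_b_formula, jac_c_formula, jac_d_formula,
    Rminus_diag, sin_0, cos_0, plus_INR.
  match goal with |- P ?a ?b ?c ?d -> P ?a' ?b' ?c' ?d' =>
    replace a' with a by ring; replace b' with b by ring;
    replace c' with c by ring; replace d' with d by ring end.
  intro H; exact H.
Qed.

Lemma lin_antidiagonal (P : R -> R -> R -> R -> Prop) p q th :
  let m := sin th * cos th in
  P (3 * m) (- 3 * m) (INR (p + q) * m) (INR (p + q) * m) -> lin P p q th (th + PI).
Proof.
  unfold lin; rewrite jac_a_formula, jac_b_formula, jac_c_formula, jac_d_formula,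
    Rplus_minus_l, sin_PI, cos_PI, neg_sin, neg_cos, plus_INR.
  match goal with |- P ?a ?b ?c ?d -> P ?a' ?b' ?c' ?d' =>
    replace a' with a by ring; replace b' with b by ring;
    replace c' with c by ring; replace d' with d by ring end.
  intro H; exact H.
Qed.

Lemma lin_saddle_on_axes p q th al :
  sin th * cos th = 0 -> jac_a th al * jac_d p q th al < 0 -> lin saddle p q th al.
Proof.
  intros Haxis Hsign; unfold lin.
  replace (jac_b th al) with 0 by (rewrite jac_b_formula, (Rmult_assoc 3), Haxis; ring).
  apply saddle_lower_triangular; exact Hsign.
Qed.

Lemma sin_plus_2kPI x k : sin (x + 2 * IZR k * PI) = sin x.
Proof.
  rewrite sin_plus; replace (2 * IZR k * PI) with (2 * (IZR k * PI)) by ring.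
  rewrite cos_2a_sin, sin_2a, (sin_eq_0_1 (IZR k * PI)) by (exists k; ring); ring.
Qed.

Lemma cos_plus_2kPI x k : cos (x + 2 * IZR k * PI) = cos x.
Proof.
  rewrite cos_plus; replace (2 * IZR k * PI) with (2 * (IZR k * PI)) by ring.
  rewrite cos_2a_sin, sin_2a, (sin_eq_0_1 (IZR k * PI)) by (exists k; ring); ring.
Qed.

Lemma sin_eq_0_mod_2PI x :
  sin x = 0 -> exists k : Z, x + 2 * IZR k * PI = 0 \/ x + 2 * IZR k * PI = PI.
Proof.
  intros [k ->]%sin_eq_0_0.
  destruct (Z.Even_or_Odd k) as [[j ->]|[j ->]]; exists (- j)%Z;
    rewrite ?plus_IZR, ?mult_IZR, ?opp_IZR; [left|right]; ring.
Qed.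

Lemma cos_eq_0_mod_2PI x :
  cos x = 0 -> exists k : Z, x + 2 * IZR k * PI = PI / 2 \/ x + 2 * IZR k * PI = 3 * PI / 2.
Proof.
  intros [k ->]%cos_eq_0_0.
  destruct (Z.Even_or_Odd k) as [[j ->]|[j ->]]; exists (- j)%Z;
    rewrite ?plus_IZR, ?mult_IZR, ?opp_IZR; [left|right]; field.
Qed.

Lemma sin_eq_0_between x : - (PI / 2) <= x <= 3 * PI / 2 -> sin x = 0 -> x = 0 \/ x = PI.
Proof.
  intros Hx [k ->]%sin_eq_0_0; pose proof PI_RGT_0.
  assert (Hk : (-1 < k < 2)%Z) by (split; apply lt_IZR; simpl; nra).
  assert (k = 0 \/ k = 1)%Z as [-> | ->] by lia; simpl; [left|right]; ring.
Qed.

Lemma sin_eq_0_first_quadrant x : 0 <= x <= PI / 2 -> sin x = 0 -> x = 0.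
Proof.
  intros Hx Hs; destruct (Rle_lt_or_eq_dec 0 x) as [Hpos|]; [lra| |auto].
  pose proof (sin_gt_0 x Hpos ltac:(pose proof PI_RGT_0; lra)); lra.
Qed.

Lemma cos_eq_0_first_quadrant x : 0 <= x <= PI / 2 -> cos x = 0 -> x = PI / 2.
Proof.
  intros Hx Hc; destruct (Rle_lt_or_eq_dec x (PI / 2)) as [Hlt|]; [lra| |auto].
  pose proof (cos_gt_0 x ltac:(lra) Hlt); lra.
Qed.

Definition alpha0 (p q : nat) : R := atan (sqrt (INR q / INR p)).

Section Alpha0.

Variables p q : nat.
Hypotheses (hp : (0 < p)%nat) (hq : (0 < q)%nat).

Let ratio_pos : 0 < INR q / INR p.
Proof. apply Rdiv_lt_0_compat; apply lt_0_INR; assumption. Qed.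

Lemma alpha0_bounds : 0 < alpha0 p q < PI / 2.
Proof.
  unfold alpha0; split; [|apply atan_bound].
  rewrite <- atan_0; apply atan_increasing, sqrt_lt_R0, ratio_pos.
Qed.

Lemma alpha0_balance :
  INR q * cos (alpha0 p q) * cos (alpha0 p q) = INR p * sin (alpha0 p q) * sin (alpha0 p q).
Proof.
  pose proof alpha0_bounds as Hb; pose proof (lt_0_INR _ hp).
  assert (Hc : 0 < cos (alpha0 p q)) by (apply cos_gt_0; lra).
  assert (Hs : sin (alpha0 p q) = sqrt (INR q / INR p) * cos (alpha0 p q)).
  { rewrite <- (tan_atan (sqrt (INR q / INR p))); fold (alpha0 p q).
    unfold tan; field; lra. }
  rewrite Hs.
  replace (INR p * (sqrt (INR q / INR p) * cos (alpha0 p q)) *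
             (sqrt (INR q / INR p) * cos (alpha0 p q)))
    with (INR p * (sqrt (INR q / INR p) * sqrt (INR q / INR p)) *
            cos (alpha0 p q) * cos (alpha0 p q)) by ring.
  rewrite sqrt_sqrt by (apply Rlt_le, ratio_pos); field; lra.
Qed.

Lemma alpha0_unique th :
  0 <= th <= PI / 2 -> INR q * cos th * cos th = INR p * sin th * sin th -> th = alpha0 p q.
Proof.
  intros Hth Hbal; pose proof (lt_0_INR _ hp); pose proof (lt_0_INR _ hq).
  assert (Hlt : th < PI / 2).
  { destruct (Rle_lt_or_eq_dec _ _ (proj2 Hth)) as [|Heq]; [assumption|].
    rewrite Heq, cos_PI2, sin_PI2 in Hbal; lra. }
  assert (Hgt : 0 < th).
  { destruct (Rle_lt_or_eq_dec _ _ (proj1 Hth)) as [|Heq]; [assumption|].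
    rewrite <- Heq, cos_0, sin_0 in Hbal; lra. }
  assert (Hc : 0 < cos th) by (apply cos_gt_0; lra).
  assert (Hs : 0 < sin th) by (apply sin_gt_0; pose proof PI_RGT_0; lra).
  assert (Htan : tan th = sqrt (INR q / INR p)).
  { rewrite <- (sqrt_square (tan th)) by (unfold tan; apply Rlt_le, Rdiv_lt_0_compat; lra).
    f_equal; unfold tan; field_simplify_eq; [|lra].
    nra. }
  unfold alpha0; rewrite <- Htan, atan_tan; lra.
Qed.

End Alpha0.

Lemma Fal_diagonal p q th :
  Fal p q th th = INR q * cos th * cos th - INR p * sin th * sin th.
Proof. unfold Fal; ring. Qed.

Lemma Fal_antidiagonal p q th :
  Fal p q th (th + PI) = - (INR q * cos th * cos th - INR p * sin th * sin th).
Proof. unfold Fal; rewrite neg_cos, neg_sin; ring. Qed.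

Lemma stationary_shift_2kPI p q th al k :
  stationary p q th (al + 2 * IZR k * PI) <-> stationary p q th al.
Proof.
  unfold stationary, Fth, Fal.
  replace (al + 2 * IZR k * PI - th) with (al - th + 2 * IZR k * PI) by ring.
  rewrite !sin_plus_2kPI, !cos_plus_2kPI; reflexivity.
Qed.

Lemma listed_point_in_R a0 th al : 0 < a0 < PI / 2 -> listed_point a0 th al -> inR th al.
Proof.
  intros Ha0 Hpt; pose proof PI_RGT_0; unfold listed_point, inR, inR1, inR2 in *.
  destruct Hpt as [[-> ->]|[[-> ->]|[[-> ->]|[[-> ->]|[[-> ->]|[-> ->]]]]]];
    [left|right|left|right|left|left]; lra.
Qed.

Section Stationary.

Variables p q : nat.
Hypotheses (hp : (0 < p)%nat) (hq : (0 < q)%nat).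

Lemma listed_point_stationary th al :
  listed_point (alpha0 p q) th al -> stationary p q th al.
Proof.
  pose proof (alpha0_balance p q hp hq) as Hbal.
  unfold listed_point, stationary;
  intros [[-> ->]|[[-> ->]|[[-> ->]|[[-> ->]|[[-> ->]|[-> ->]]]]]];
    try rewrite Fal_diagonal; try rewrite Fal_antidiagonal; unfold Fth, Fal.
  - rewrite Rminus_diag, sin_0; split; [ring|lra].
  - rewrite Rplus_minus_l, sin_PI; split; [ring|lra].
  - rewrite sin_0, cos_PI2; split; ring.
  - replace (3 * PI / 2) with (3 * (PI / 2)) by field.
    rewrite sin_0, cos_3PI2; split; ring.
  - rewrite cos_PI2, sin_0; split; ring.
  - rewrite cos_PI2, sin_PI; split; ring.
Qed.

Lemma stationary_in_R_listed th al :
  inR th al -> stationary p q th al ->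
  exists k : Z, listed_point (alpha0 p q) th (al + 2 * IZR k * PI).
Proof.
  intros Hreg [Hth Hal]; pose proof (lt_0_INR _ hp); pose proof (lt_0_INR _ hq).
  assert (Hquad : 0 <= th <= PI / 2) by (destruct Hreg as [[]|[]]; assumption).
  assert (Hdiff : - (PI / 2) <= al - th <= 3 * PI / 2)
    by (pose proof PI_RGT_0; destruct Hreg as [[]|[]]; lra).
  unfold Fth in Hth; unfold listed_point.
  destruct (Rmult_integral _ _ Hth) as [Hsc|Hs].
  - destruct (Rmult_integral _ _ Hsc) as [H3s|Hc].
    + assert (Hs : sin th = 0) by (destruct (Rmult_integral _ _ H3s); lra).
      apply sin_eq_0_first_quadrant in Hs; [subst th|assumption].
      unfold Fal in Hal; rewrite cos_0, sin_0 in Hal.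
      destruct (cos_eq_0_mod_2PI al) as [k Hk]; [nra|].
      exists k; destruct Hk; tauto.
    + apply cos_eq_0_first_quadrant in Hc; [subst th|assumption].
      unfold Fal in Hal; rewrite cos_PI2, sin_PI2 in Hal.
      destruct (sin_eq_0_mod_2PI al) as [k Hk]; [nra|].
      exists k; destruct Hk; tauto.
  - exists 0%Z; rewrite Rmult_0_r, Rmult_0_l, Rplus_0_r.
    destruct (sin_eq_0_between _ Hdiff Hs) as [Hal0|HalPI].
    + replace al with th in * by lra; rewrite Fal_diagonal in Hal.
      rewrite <- (alpha0_unique p q hp hq th); [tauto|assumption|lra].
    + replace al with (th + PI) in * by lra; rewrite Fal_antidiagonal in Hal.
      rewrite <- (alpha0_unique p q hp hq th); [tauto|assumption|lra].
Qed.

End Stationary.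

Lemma lin_saddle_at_theta_0 p q al : (0 < q)%nat -> cos al = 0 -> lin saddle p q 0 al.
Proof.
  intros hq Hc; pose proof (lt_0_INR _ hq).
  assert (Hs : sin al * sin al = 1)
    by (pose proof (sin2_cos2 al); rewrite Hc in *; unfold Rsqr in *; lra).
  apply lin_saddle_on_axes; [rewrite sin_0; ring|].
  rewrite jac_a_formula, jac_d_formula, Rminus_0_r, sin_0, cos_0, Hc.
  nra.
Qed.

Lemma lin_saddle_at_theta_PI2 p q al : (0 < p)%nat -> sin al = 0 -> lin saddle p q (PI / 2) al.
Proof.
  intros hp Hs; pose proof (lt_0_INR _ hp).
  assert (Hc : cos al * cos al = 1)
    by (pose proof (sin2_cos2 al); rewrite Hs in *; unfold Rsqr in *; lra).
  apply lin_saddle_on_axes; [rewrite cos_PI2; ring|].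
  rewrite jac_a_formula, jac_d_formula, sin_minus, cos_minus, sin_PI2, cos_PI2, Hs.
  nra.
Qed.

Lemma discriminant_diagonal N m :
  discriminant (- 3 * m) (3 * m) (- N * m) (- N * m) = m * m * (N * N - 18 * N + 9).
Proof. unfold discriminant; ring. Qed.

Lemma discriminant_antidiagonal N m :
  discriminant (3 * m) (- 3 * m) (N * m) (N * m) = m * m * (N * N - 18 * N + 9).
Proof. unfold discriminant; ring. Qed.

(* The roots of [N^2 - 18 N + 9] are [9 -+ 6 sqrt 2], about 0.51 and 17.49. *)
Lemma threshold_quadratic_neg (n : nat) :
  (1 <= n <= 17)%nat -> INR n * INR n - 18 * INR n + 9 < 0.
Proof.
  intros [H1 H17]; apply le_INR in H1, H17.
  rewrite (INR_IZR_INZ 17) in H17; simpl in H1, H17; nra.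
Qed.

Lemma threshold_quadratic_pos (n : nat) :
  (18 <= n)%nat -> 0 < INR n * INR n - 18 * INR n + 9.
Proof.
  intro H18; apply le_INR in H18; rewrite (INR_IZR_INZ 18) in H18; simpl in H18; nra.
Qed.

Section DiagonalMatrices.

Variables (n : nat) (m : R).
Hypothesis m_pos : 0 < m.

Let N_nonneg : 0 <= INR n.
Proof. apply pos_INR. Qed.

Let m_sq_pos : 0 < m * m.
Proof. apply Rmult_lt_0_compat; assumption. Qed.

Lemma spiral_sink_diagonal :
  (1 <= n <= 17)%nat -> spiral_sink (- 3 * m) (3 * m) (- INR n * m) (- INR n * m).
Proof.
  intro Hn; apply spiral_sink_of_trace_neg; [nra|].
  rewrite discriminant_diagonal; pose proof (threshold_quadratic_neg n Hn); nra.
Qed.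

Lemma nodal_sink_diagonal :
  (18 <= n)%nat -> nodal_sink (- 3 * m) (3 * m) (- INR n * m) (- INR n * m).
Proof.
  intro Hn; pose proof (lt_0_INR n ltac:(lia)).
  apply nodal_sink_of_trace_neg; [nra|nra|].
  rewrite discriminant_diagonal; pose proof (threshold_quadratic_pos n Hn); nra.
Qed.

Lemma spiral_source_antidiagonal :
  (1 <= n <= 17)%nat -> spiral_source (3 * m) (- 3 * m) (INR n * m) (INR n * m).
Proof.
  intro Hn; apply spiral_source_of_trace_pos; [nra|].
  rewrite discriminant_antidiagonal; pose proof (threshold_quadratic_neg n Hn); nra.
Qed.

Lemma nodal_source_antidiagonal :
  (18 <= n)%nat -> nodal_source (3 * m) (- 3 * m) (INR n * m) (INR n * m).
Proof.
  intro Hn; pose proof (lt_0_INR n ltac:(lia)).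
  apply nodal_source_of_trace_pos; [nra|nra|].
  rewrite discriminant_antidiagonal; pose proof (threshold_quadratic_pos n Hn); nra.
Qed.

End DiagonalMatrices.

Theorem lemma4p4 (p q : nat) (hp : (0 < p)%nat) (hq : (0 < q)%nat) :
  let a0 := atan (sqrt (INR q / INR p)) in
  (forall th al, listed_point a0 th al -> inR th al) /\
  (forall th al, inR th al ->
     (stationary p q th al <->
      exists k : Z, listed_point a0 th (al + 2 * IZR k * PI))) /\
  ((p + q <= 17)%nat -> lin spiral_sink p q a0 a0) /\
  ((18 <= p + q)%nat -> lin nodal_sink p q a0 a0) /\
  ((p + q <= 17)%nat -> lin spiral_source p q a0 (a0 + PI)) /\
  ((18 <= p + q)%nat -> lin nodal_source p q a0 (a0 + PI)) /\
  lin saddle p q 0 (PI / 2) /\ lin saddle p q 0 (3 * PI / 2) /\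
  lin saddle p q (PI / 2) 0 /\ lin saddle p q (PI / 2) PI.
Proof.
  intro a0; change a0 with (alpha0 p q).
  pose proof (alpha0_bounds p q hp hq) as Ha0.
  assert (Hm : 0 < sin (alpha0 p q) * cos (alpha0 p q)).
  { pose proof PI_RGT_0; apply Rmult_lt_0_compat; [apply sin_gt_0|apply cos_gt_0]; lra. }
  split; [intros th al; apply listed_point_in_R, Ha0|].
  split.
  { intros th al Hreg; split; [apply stationary_in_R_listed; assumption|].
    intros [k Hk]; apply (stationary_shift_2kPI _ _ _ _ k).
    apply listed_point_stationary; assumption. }
  split; [intro Hn; apply lin_diagonal, spiral_sink_diagonal; [exact Hm|lia]|].
  split; [intro Hn; apply lin_diagonal, nodal_sink_diagonal; [exact Hm|lia]|].
  split; [intro Hn; apply lin_antidiagonal, spiral_source_antidiagonal; [exact Hm|lia]|].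
  split; [intro Hn; apply lin_antidiagonal, nodal_source_antidiagonal; [exact Hm|lia]|].
  split; [apply lin_saddle_at_theta_0; [exact hq|apply cos_PI2]|].
  split.
  { apply lin_saddle_at_theta_0; [exact hq|].
    replace (3 * PI / 2) with (3 * (PI / 2)) by field; apply cos_3PI2. }
  split; apply lin_saddle_at_theta_PI2; [exact hp|apply sin_0|exact hp|apply sin_PI].
Qed.
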